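(* Let $n$ be an even nonnegative integer, and let $\mathbf n=\mathbf n_1\cdots\mathbf n_r$ be the block decomposition of its minimal hyperbinary expansion ($r=0$ if $n=0$). Let $(a_1,\dots,a_r)$ be the lengths of the blocks as words, and let $(t_1,\dots,t_r)\in\{1,2\}^r$ be their types. Define functions on triples of integers: \[b_1(\alpha,\beta,\sigma)=\alpha\beta+\sigma,\qquad b_2(\alpha,\beta,\sigma)=\beta+\alpha\sigma,\] \[s_1(\alpha,\beta,\sigma)=(\alpha-1)\beta+\sigma,\qquad s_2(\alpha,\beta,\sigma)=\sigma.\] Set $h_0=k_0=1$, and for $i\in\{0,\dots,r-1\}$ set \[h_{i+1}=b_{t_{r-i}}(a_{r-i},h_i,k_i),\qquad k_{i+1}=s_{t_{r-i}}(a_{r-i},h_i,k_i).\] Then $b(n)=h_r$.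
   Context: A hyperbinary expansion of a nonnegative integer $m$ is a word $x_0\cdots x_k$ over $\{0,1,2\}$ with $x_0\ne0$ and $\sum_i x_i2^{k-i}=m$; the empty word is the unique hyperbinary expansion of $0$. $b(m)$ is the number of hyperbinary expansions of $m$. The minimal hyperbinary expansion of $m$ is its unique hyperbinary expansion with no digit $0$. A block of type $1$ is a word $1^t2$ (length $t+1$) and a block of type $2$ is a word $2^t$ (length $t$), with $t\ge1$. The minimal hyperbinary expansion of a positive even integer can be written uniquely as a concatenation of blocks with no two consecutive blocks of type $2$; this is its block decomposition. *)

From mathcomp Require Import all_boot.
Set Implicit Arguments. Unset Strict Implicit. Unset Printing Implicit Defensive.

(* Words over {0,1,2} are represented as seq nat with all digits <= 2. *)

Definition hval (w : seq nat) : nat := foldl (fun acc d => acc * 2 + d) 0 w.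

(* w is a hyperbinary expansion of m: digits in {0,1,2}, leading digit
   nonzero (the empty word is allowed and has value 0), value m. *)
Definition is_hyperbinary (m : nat) (w : seq nat) : bool :=
  all (fun d => d <= 2) w && (head 1 w != 0) && (hval w == m).

Fixpoint words (k : nat) : seq (seq nat) :=
  if k is k'.+1 then [seq d :: w | d <- iota 0 3, w <- words k'] else [:: [::]].

(* A hyperbinary expansion of
   length L >= 1 has value >= 2^(L-1) >= L, so every expansion of m has length
   at most m; we count over all words of length <= m+1 (a safe bound). *)
Definition hb (m : nat) : nat :=
  \sum_(L < m.+2) count (is_hyperbinary m) (words L).

(* the minimal hyperbinary expansion: a hyperbinary expansion with no 0 digit *)
Definition is_minimal_hyperbinary (m : nat) (w : seq nat) : bool :=
  is_hyperbinary m w && (0 \notin w).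

(* A block is (type, t): type 1 gives 1^t 2, type 2 gives 2^t, t >= 1. *)
Definition block_word (blk : nat * nat) : seq nat :=
  if blk.1 == 1 then rcons (nseq blk.2 1) 2 else nseq blk.2 2.

Definition block_ok (blk : nat * nat) : bool :=
  ((blk.1 == 1) || (blk.1 == 2)) && (1 <= blk.2).

Definition block_len (blk : nat * nat) : nat := size (block_word blk).

Fixpoint no_consec2 (bs : seq (nat * nat)) : bool :=
  match bs with
  | b1 :: ((b2 :: _) as bs') => ~~ ((b1.1 == 2) && (b2.1 == 2)) && no_consec2 bs'
  | _ => true
  end.

Definition is_block_decomposition (w : seq nat) (bs : seq (nat * nat)) : bool :=
  all block_ok bs && no_consec2 bs && (flatten (map block_word bs) == w).

Definition bfun (t a h k : nat) : nat := if t == 1 then a * h + k else h + a * k.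
Definition sfun (t a h k : nat) : nat := if t == 1 then (a - 1) * h + k else k.

(* one step (h_i, k_i) -> (h_{i+1}, k_{i+1}) using block n_{r-i} *)
Definition hk_step (blk : nat * nat) (hk : nat * nat) : nat * nat :=
  (bfun blk.1 (block_len blk) hk.1 hk.2, sfun blk.1 (block_len blk) hk.1 hk.2).

(* (h_r, k_r): foldr processes the last block n_r first, starting from (1,1) *)
Definition hk (bs : seq (nat * nat)) : nat * nat := foldr hk_step (1, 1) bs.

From mathcomp Require Import all_boot zify.

(* Appending a digit to a word multiplies the pair (b(m), b(m+1)) by a fixed
   matrix, since b(2m+1) = b(m) and b(2m+2) = b(m) + b(m+1).  Hence for a word
   s over {1,2}, b(value of p ++ s) = alpha b(p) + beta b(p+1) where (alpha, beta)
   depends only on s.  A block 1^t 2 or 2^t acts on (alpha, beta) by an explicit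
   map, and folding these maps from the last block reproduces (h_i, k_i) as
   (alpha + beta, alpha). *)

Definition hb_size (L m : nat) : nat := count (is_hyperbinary m) (words L).

Lemma mem_words L w : (w \in words L) = (size w == L) && all (fun d => d < 3) w.
Proof.
elim: L w => [|L IH] [|d u] //.
- by apply/allpairsP => -[[e v] [_ _ //]].
- apply/allpairsP/idP => [[[e v] /= [He Hv [-> ->]]]|].
    by move: Hv He; rewrite -/(words L) IH eqSS => /andP[-> ->]; rewrite !inE => /or3P[]/eqP->.
  rewrite [X in X -> _]/= eqSS => /andP[Hs /andP[Hd Ha]]; exists (d, u).
  by rewrite /= -/(words L) IH Hs Ha; split=> //; case: d Hd => [|[|[|]]].
Qed.

Lemma uniq_words L : uniq (words L).
Proof.
elim: L => [|L IH] //.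
apply: (@allpairs_uniq _ _ _ (fun d w => d :: w)) => //.
by move=> [a b] [c e] _ _ /= [-> ->].
Qed.

Lemma perm_words_rev L : perm_eq (map rev (words L)) (words L).
Proof.
apply: uniq_perm; rewrite ?map_inj_uniq ?uniq_words //; first exact: inv_inj revK.
move=> w; apply/mapP/idP => [[u Hu ->]|Hw]; last exists (rev w); rewrite ?revK //.
- by move: Hu; rewrite !mem_words size_rev all_rev.
- by move: Hw; rewrite !mem_words size_rev all_rev.
Qed.

Lemma words_le2 L u : u \in words L -> all (fun d => d <= 2) u.
Proof. by rewrite mem_words => /andP[_]. Qed.

Lemma count_wordsS (P : pred (seq nat)) L :
  count P (words L.+1) = count (fun u => P (rcons u 0)) (words L)
    + count (fun u => P (rcons u 1)) (words L) + count (fun u => P (rcons u 2)) (words L).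
Proof.
rewrite -(permP (perm_words_rev L.+1) P) count_map /= !count_cat !count_map addn0 addnA.
by congr (_ + _ + _); rewrite -[LHS](permP (perm_words_rev L)) count_map;
  apply: eq_count => u /=; rewrite rev_cons revK.
Qed.

Lemma hval_rcons u d : hval (rcons u d) = hval u * 2 + d.
Proof. by rewrite /hval foldl_rcons. Qed.

Lemma hval_eq0 u : (hval u == 0) = all (fun d => d == 0) u.
Proof.
elim/last_ind: u => [|u d IH] //.
rewrite hval_rcons all_rcons -IH andbC.
by apply/eqP/andP => [H|[/eqP H1 /eqP H2]]; [split; apply/eqP; lia | lia].
Qed.

Lemma is_hyperbinary_rcons m u d : all (fun x => x <= 2) u -> d <= 2 ->
  is_hyperbinary m (rcons u d) = (head d u != 0) && (hval u * 2 + d == m).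
Proof. by move=> Hu Hd; rewrite /is_hyperbinary all_rcons Hd Hu hval_rcons; case: u Hu. Qed.

Lemma hb_size0 m : hb_size 0 m = (m == 0).
Proof. by rewrite /hb_size /= /is_hyperbinary /= addn0 eq_sym. Qed.

Lemma hb_sizeS0 L : hb_size L.+1 0 = 0.
Proof.
rewrite /hb_size count_wordsS.
suff zero d : count (fun u => is_hyperbinary 0 (rcons u d)) (words L) = 0 by rewrite !zero.
apply/eqP; rewrite -leqn0 leqNgt -has_count; apply/hasPn => u _.
rewrite /is_hyperbinary hval_rcons all_rcons.
have [/eqP|] := eqVneq (hval u * 2 + d) 0; last by rewrite andbF.
rewrite addn_eq0 muln_eq0 orbF hval_eq0 => /andP[Hu /eqP ->].
by case: u Hu => [|x u] //= /andP[/eqP -> _]; rewrite andbF.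
Qed.

Lemma hb_size_odd L k : hb_size L.+1 (k * 2 + 1) = hb_size L k.
Proof.
rewrite /hb_size count_wordsS.
rewrite [X in X + _ + _](@eq_in_count _ _ pred0); last first.
  by move=> u /words_le2 Hu; rewrite is_hyperbinary_rcons //= andbC; apply/eqP; lia.
rewrite [X in _ + X + _](@eq_in_count _ _ (is_hyperbinary k)); last first.
  move=> u /words_le2 Hu; rewrite is_hyperbinary_rcons // /is_hyperbinary Hu.
  by congr andb; apply/eqP/eqP; lia.
rewrite [X in _ + _ + X](@eq_in_count _ _ pred0); last first.
  by move=> u /words_le2 Hu; rewrite is_hyperbinary_rcons //= andbC; apply/eqP; lia.
by rewrite !count_pred0 add0n addn0.
Qed.

Lemma hb_size_even L k : hb_size L.+1 (k * 2 + 2) = hb_size L k.+1 + hb_size L k.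
Proof.
rewrite /hb_size count_wordsS.
rewrite [X in X + _ + _](@eq_in_count _ _ (is_hyperbinary k.+1)); last first.
  move=> u /words_le2 Hu; rewrite is_hyperbinary_rcons // /is_hyperbinary Hu.
  by case: u {Hu} => [|x u] //=; congr andb; apply/eqP/eqP; lia.
rewrite [X in _ + X + _](@eq_in_count _ _ pred0); last first.
  by move=> u /words_le2 Hu; rewrite is_hyperbinary_rcons //= andbC; apply/eqP; lia.
rewrite [X in _ + _ + X](@eq_in_count _ _ (is_hyperbinary k)); last first.
  move=> u /words_le2 Hu; rewrite is_hyperbinary_rcons // /is_hyperbinary Hu.
  by case: u {Hu} => [|x u] /=; [apply/eqP/eqP | congr andb; apply/eqP/eqP]; lia.
by rewrite count_pred0 addn0.
Qed.

Lemma nat_cases2 m : [\/ m = 0, exists k, m = k * 2 + 1 | exists k, m = k * 2 + 2].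
Proof.
have := odd_double_half m; rewrite -muln2.
case: (odd m) => /= Hm; first by apply: Or32; exists m./2; lia.
case: m Hm => [|m] Hm; first exact: Or31.
by apply: Or33; exists (m.+1./2 - 1); lia.
Qed.

Lemma hb_size_gt L m : m.+1 < L -> hb_size L m = 0.
Proof.
elim: L m => [|L IH] m // HL.
case: (nat_cases2 m) HL => [->|[k ->]|[k ->]] HL.
- exact: hb_sizeS0.
- by rewrite hb_size_odd IH //; lia.
- by rewrite hb_size_even !IH //; lia.
Qed.

Lemma hbE {m N} : m.+2 <= N -> hb m = \sum_(L < N) hb_size L m.
Proof.
move=> HN; rewrite /hb (big_ord_widen N (hb_size^~ m) HN) big_mkcond.
apply: eq_bigr => i _; case: ifP => // /negbT; rewrite -leqNgt => Hi.
by rewrite hb_size_gt.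
Qed.

Lemma hb0 : hb 0 = 1.
Proof. by rewrite /hb !big_ord_recr big_ord0. Qed.

Lemma hb_odd k : hb (k * 2 + 1) = hb k.
Proof.
rewrite (hbE (leqnn _.+2)) big_ord_recl hb_size0 addn1 add0n (@hbE k (k * 2).+2); last by lia.
by apply: eq_bigr => i _; rewrite lift0 -(hb_size_odd i) addn1.
Qed.

Lemma hb_even k : hb (k * 2 + 2) = hb k.+1 + hb k.
Proof.
rewrite (hbE (leqnn _.+2)) big_ord_recl hb_size0 addn2 add0n.
rewrite (@hbE k.+1 (k * 2).+3) ?(@hbE k (k * 2).+3) -?big_split; try lia.
by apply: eq_bigr => i _; rewrite lift0 [RHS]/= -(hb_size_even i) addn2.
Qed.

Definition suffix_coeffs_step (d : nat) (c : nat * nat) : nat * nat :=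
  if d == 1 then (c.1 + c.2, c.2) else (c.1, c.1 + c.2).

Definition suffix_coeffs (s : seq nat) : nat * nat := foldr suffix_coeffs_step (1, 0) s.

Lemma hb_hval_cat p s : all (fun d => (d == 1) || (d == 2)) s ->
  hb (hval (p ++ s)) =
    (suffix_coeffs s).1 * hb (hval p) + (suffix_coeffs s).2 * hb (hval p).+1.
Proof.
elim: s p => [|d s IH] p /=; first by rewrite cats0 mul1n mul0n addn0.
case/andP=> /orP[]/eqP-> Hs; rewrite -cat_rcons IH // hval_rcons /suffix_coeffs_step;
  case: (suffix_coeffs s) => a c /=.
- by rewrite -addnS hb_odd hb_even; nia.
- have -> : (hval p * 2 + 2).+1 = (hval p).+1 * 2 + 1 by lia.
  by rewrite hb_even hb_odd; nia.
Qed.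

Lemma hb_hval w : all (fun d => (d == 1) || (d == 2)) w ->
  hb (hval w) = (suffix_coeffs w).1 + (suffix_coeffs w).2.
Proof.
by move=> Hw; rewrite -[w]cat0s hb_hval_cat //= -[1]/(0 * 2 + 1) hb_odd hb0 !muln1.
Qed.

Lemma foldr_coeffs_nseq1 t c :
  foldr suffix_coeffs_step c (nseq t 1) = (c.1 + t * c.2, c.2).
Proof.
case: c => a b; elim: t => [|t IH] /=; first by rewrite ?addn0.
by rewrite IH /suffix_coeffs_step /=; congr pair; lia.
Qed.

Lemma foldr_coeffs_nseq2 t c :
  foldr suffix_coeffs_step c (nseq t 2) = (c.1, t * c.1 + c.2).
Proof.
case: c => a b; elim: t => [|t IH] /=; first by rewrite ?addn0.
by rewrite IH /suffix_coeffs_step /=; congr pair; lia.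
Qed.

Lemma hk_suffix_coeffs bs : all block_ok bs ->
  let c := suffix_coeffs (flatten (map block_word bs)) in hk bs = (c.1 + c.2, c.1).
Proof.
elim: bs => [|[ty t] bs IH] //= /andP[/andP[/= Hty _] Hbs].
rewrite IH // /suffix_coeffs foldr_cat -/(suffix_coeffs _); case: (suffix_coeffs _) => a c.
rewrite /hk_step /block_len /block_word /bfun /sfun /=.
case/orP: Hty => /eqP-> /=.
- by rewrite size_rcons size_nseq -cats1 foldr_cat foldr_coeffs_nseq1 /=; congr pair; nia.
- by rewrite foldr_coeffs_nseq2 size_nseq /=; congr pair; lia.
Qed.

Theorem mainTheorem13 (n : nat) (w : seq nat) (bs : seq (nat * nat)) :
  ~~ odd n ->
  is_minimal_hyperbinary n w ->
  is_block_decomposition w bs ->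
  hb n = (hk bs).1.
Proof.
move=> _ /andP[/andP[/andP[Hdigits _] /eqP <-] Hno0] /andP[/andP[Hok _] /eqP Hw].
have Hw12 : all (fun d => (d == 1) || (d == 2)) w.
  apply/allP => d Hd; have := allP Hdigits d Hd.
  by case: d Hd => [|[|[|]]] // Hd; rewrite Hd in Hno0.
by rewrite hk_suffix_coeffs // Hw hb_hval.
Qed.
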